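(* Let $R$ be a ring and $T$ a right $R$-module possessing a projective resolution $\sigma$ such that the first syzygy $\Omega^1(T)$ of $T$ in $\sigma$ has a projective cover. Then $T$ is $\tau$-rigid if and only if $\operatorname{Gen}T\subseteq T^{\perp}$.
   Context: A module $T$ is ($\tau$-rigid) if there exists a projective presentation $P_1\xrightarrow{\varphi}P_0\to T\to 0$ such that $\operatorname{Hom}_R(\varphi,M):\operatorname{Hom}_R(P_0,M)\to\operatorname{Hom}_R(P_1,M)$ is surjective for every $M\in\operatorname{Gen}T$. $\operatorname{Gen}T$ is the class of epimorphic images of direct sums of copies of $T$, and $T^{\perp}=\{M:\operatorname{Ext}^1_R(T,M)=0\}$. *)

From HB Require Import structures.
From mathcomp Require Import all_boot all_algebra.
Set Implicit Arguments. Unset Strict Implicit. Unset Printing Implicit Defensive.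
Import GRing.Theory.
Local Open Scope ring_scope.

(* Right R-modules are left modules over the converse ring R^c. *)
Notation rmodType R := (lmodType (GRing.converse R)).

Definition surj (A B : Type) (f : A -> B) : Prop := forall y, exists x, f x = y.

Definition projective (R : pzRingType) (P : rmodType R) : Prop :=
  forall (M N : rmodType R) (g : {linear M -> N}) (f : {linear P -> N}),
    surj g -> exists h : {linear P -> M}, forall x, g (h x) = f x.

(* Gen T : epimorphic images of direct sums T^(I); a linear map T^(I) -> M is a
   family (f_i)_{i in I} of linear maps T -> M, and it is onto iff every m is a
   finite sum of f_i(t_i). *)
Definition Gen (R : pzRingType) (T M : rmodType R) : Prop :=
  exists (I : Type) (f : I -> {linear T -> M}),
    forall m : M, exists s : seq (I * T), m = \sum_(p <- s) f p.1 p.2.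

(* Ext^1_R(T, M) = 0 (Yoneda): every short exact sequence 0 -> M -> E -> T -> 0 splits. *)
Definition Ext1_zero (R : pzRingType) (T M : rmodType R) : Prop :=
  forall (E : rmodType R) (i : {linear M -> E}) (p : {linear E -> T}),
    injective i -> surj p -> (forall e, p e = 0 <-> exists m, e = i m) ->
    exists s : {linear T -> E}, forall t, p (s t) = t.

Definition perp (R : pzRingType) (T M : rmodType R) : Prop := Ext1_zero T M.

Definition tau_rigid (R : pzRingType) (T : rmodType R) : Prop :=
  exists (P1 P0 : rmodType R) (phi : {linear P1 -> P0}) (pi : {linear P0 -> T}),
    [/\ projective P1, projective P0, surj pi,
        (forall x, pi x = 0 <-> exists y, x = phi y) &
        forall M : rmodType R, Gen T M ->
          forall g : {linear P1 -> M}, exists h : {linear P0 -> M},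
            forall y, h (phi y) = g y].

Definition proj_resolution (R : pzRingType) (T : rmodType R)
  (P : nat -> rmodType R) (d : forall n, {linear P n.+1 -> P n})
  (eps : {linear P 0 -> T}) : Prop :=
  [/\ forall n, projective (P n), surj eps,
      (forall x, eps x = 0 <-> exists y, x = d 0 y) &
      forall n (x : P n.+1), d n x = 0 <-> exists y, x = d n.+1 y].

Definition superfluous_kernel (R : pzRingType) (Q X : rmodType R) (q : {linear Q -> X}) : Prop :=
  forall L : {pred Q}, submod_closed L ->
    (forall x, exists k l, q k = 0 /\ l \in L /\ x = k + l) -> forall x, x \in L.

(* The first syzygy Omega^1 = ker (eps : P 0 -> T) has a projective cover:
   a projective Q with q : Q -> P 0 mapping onto ker eps, with superfluous kernel. *)
Definition syzygy1_has_proj_cover (R : pzRingType) (T : rmodType R)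
  (P0 : rmodType R) (eps : {linear P0 -> T}) : Prop :=
  exists (Q : rmodType R) (q : {linear Q -> P0}),
    [/\ projective Q, (forall x, eps x = 0 <-> exists y, x = q y) & superfluous_kernel q].

(* Forward direction: given an extension 0 -> M -> E -> T -> 0 with M in Gen T,
   lift P0 -> T to E; the induced map P1 -> M extends to P0 by tau-rigidity, and
   subtracting it yields a map that factors through T as a section.
   Converse: use the presentation Q -q-> P0 -> T -> 0 given by the projective
   cover of the syzygy. For g : Q -> M with M in Gen T, the quotient
   N = M / g(ker q) is again in Gen T, so Ext^1(T, N) = 0 and, via a pushout,
   the map Q -> M -> N extends over P0. Lifting that extension along M -> N by
   projectivity of P0 gives h such that g - h q takes values in g(ker q); then
   ker (g - h q) + ker q = Q, and superfluity of ker q forces h q = g. *)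

From HB Require Import structures.
From mathcomp Require Import all_boot all_algebra.
From mathcomp Require Import boolp.

Set Implicit Arguments. Unset Strict Implicit. Unset Printing Implicit Defensive.
Import GRing.Theory.
Local Open Scope ring_scope.

Lemma linear_of_graph (K : pzRingType) (U V : lmodType K) (rel : U -> V -> Prop) :
  (forall u, exists v, rel u v) ->
  (forall u v v', rel u v -> rel u v' -> v = v') ->
  (forall a u u' v v', rel u v -> rel u' v' -> rel (a *: u + u') (a *: v + v')) ->
  exists F : {linear U -> V}, forall u, rel u (F u).
Proof.
move=> total functional closed.
pose F u := projT1 (cid (total u)).
have relF u : rel u (F u) by exact: projT2 (cid (total u)).
have linF : linear F.
  by move=> a u u'; apply: functional (closed _ _ _ _ _ (relF u) (relF u')).
pose FL : {linear U -> V} := HB.pack F (GRing.isLinear.Build _ _ _ _ F linF).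
by exists FL.
Qed.

Section LinearFactor.
Variables (K : pzRingType) (U V W : lmodType K).

Lemma linear_factor_mono (f : {linear U -> W}) (i : {linear V -> W}) :
  injective i -> (forall u, exists v, f u = i v) ->
  exists g : {linear U -> V}, forall u, i (g u) = f u.
Proof.
move=> inj_i im_f; apply: (linear_of_graph (rel := fun u v => i v = f u)).
- by move=> u; have [v ->] := im_f u; exists v.
- by move=> u v v' iv iv'; apply: inj_i; rewrite iv iv'.
- by move=> a u u' v v' iv iv'; rewrite !linearP iv iv'.
Qed.

Lemma linear_factor_epi (p : {linear U -> V}) (f : {linear U -> W}) :
  surj p -> (forall u, p u = 0 -> f u = 0) ->
  exists g : {linear V -> W}, forall u, g (p u) = f u.
Proof.
move=> p_surj ker_f.
have f_eq u u' : p u = p u' -> f u = f u'.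
  move=> /eqP; rewrite -subr_eq0 -linearB => /eqP /ker_f /eqP.
  by rewrite linearB subr_eq0 => /eqP.
suff [g gP] : exists g : {linear V -> W}, forall v, exists2 u, p u = v & f u = g v.
  by exists g => u; have [u' /f_eq <-] := gP (p u).
apply: (linear_of_graph (rel := fun v w => exists2 u, p u = v & f u = w)).
- by move=> v; have [u <-] := p_surj v; exists (f u), u.
- by move=> _ w w' [u <- <-] [u' /f_eq -> ->].
- by move=> a _ _ _ _ [u <- <-] [u' <- <-]; exists (a *: u + u'); rewrite ?linearP.
Qed.

End LinearFactor.

Section QuotientModule.
Variables (K : pzRingType) (V : lmodType K) (S : {pred V}).
Hypothesis S_submod : submod_closed S.
Local Open Scope quotient_scope.

Let S_zmod : zmodClosed V :=
  HB.pack S (GRing.isZmodClosed.Build V S (GRing.submod_closedB S_submod)).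

Definition quotmod : Type := Quotient.quot S_zmod.
HB.instance Definition _ :=
  generic_quotient.Quotient.copy quotmod (Quotient.quot S_zmod).
HB.instance Definition _ := GRing.Zmodule.on quotmod.

Definition quotmod_pi (x : V) : quotmod := \pi_quotmod x.
HB.instance Definition _ := GRing.isZmodMorphism.Build V quotmod quotmod_pi
  (raddfB \pi_quotmod).

Lemma quotmod_pi_eq x y : (quotmod_pi x == quotmod_pi y) = (x - y \in S).
Proof. by rewrite (Quotient.idealrBE S_zmod). Qed.

Lemma quotmod_reprK (z : quotmod) : quotmod_pi (repr z) = z.
Proof. exact: reprK. Qed.

Lemma quotmod_ind (P : quotmod -> Prop) : (forall x, P (quotmod_pi x)) -> forall z, P z.
Proof. by move=> Ppi z; rewrite -[z]quotmod_reprK. Qed.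

Definition quotmod_scale (a : K) (z : quotmod) : quotmod := quotmod_pi (a *: repr z).

Lemma quotmod_piZ a x : quotmod_scale a (quotmod_pi x) = quotmod_pi (a *: x).
Proof.
apply/eqP; rewrite quotmod_pi_eq -scalerBr.
have : repr (quotmod_pi x) - x \in S by rewrite -quotmod_pi_eq quotmod_reprK.
by have [_ S_scale] := GRing.submod_closed_semi S_submod; apply: S_scale.
Qed.

Fact quotmod_scaleA a b z :
  quotmod_scale a (quotmod_scale b z) = quotmod_scale (a * b) z.
Proof. by elim/quotmod_ind: z => x; rewrite !quotmod_piZ scalerA. Qed.

Fact quotmod_scale1 : left_id 1 quotmod_scale.
Proof. by elim/quotmod_ind => x; rewrite quotmod_piZ scale1r. Qed.

Fact quotmod_scaleDr : right_distributive quotmod_scale +%R.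
Proof.
move=> a; elim/quotmod_ind => x; elim/quotmod_ind => y.
by rewrite -raddfD !quotmod_piZ scalerDr raddfD.
Qed.

Fact quotmod_scaleDl z : {morph quotmod_scale^~ z : a b / a + b}.
Proof. by elim/quotmod_ind: z => x a b; rewrite !quotmod_piZ scalerDl raddfD. Qed.

HB.instance Definition _ := GRing.Zmodule_isLmodule.Build K quotmod
  quotmod_scaleA quotmod_scale1 quotmod_scaleDr quotmod_scaleDl.

Fact quotmod_pi_scalable : scalable quotmod_pi.
Proof. by move=> a x; rewrite -quotmod_piZ. Qed.

HB.instance Definition _ := GRing.isScalable.Build K V quotmod _ quotmod_pi
  quotmod_pi_scalable.

Lemma quotmod_pi_surj : surj quotmod_pi.
Proof. by move=> z; exists (repr z); rewrite quotmod_reprK. Qed.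

Lemma quotmod_pi_eq0 x : quotmod_pi x = 0 <-> x \in S.
Proof. by have := quotmod_pi_eq x 0; rewrite raddf0 subr0 => <-; apply: rwP eqP. Qed.

End QuotientModule.

Section Pushout.
Variables (K : pzRingType) (Q X N : lmodType K).
Variables (q : {linear Q -> X}) (u : {linear Q -> N}).

Definition pushout_rel : {pred X * N} := [pred z | `[< exists y, z = (q y, - u y) >]].

Fact pushout_rel_submod_closed : submod_closed pushout_rel.
Proof.
split; first by apply/asboolP; exists 0; rewrite !raddf0 ?oppr0.
move=> a _ _ /asboolP[y ->] /asboolP[y' ->]; apply/asboolP; exists (a *: y + y').
by rewrite [q (_ + _)]linearP [u (_ + _)]linearP opprD -scalerN.
Qed.

Definition pushout : Type := quotmod pushout_rel_submod_closed.
HB.instance Definition _ := GRing.Lmodule.on pushout.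
Local Notation pi := (quotmod_pi pushout_rel_submod_closed).

Definition pushout_inl (x : X) : pushout := pi (x, 0).
Definition pushout_inr (n : N) : pushout := pi (0, n).

Fact pushout_inl_linear : linear pushout_inl.
Proof.
move=> a x x'; rewrite -linearP; congr (pi (_, _)).
by rewrite -[RHS]/(a *: 0 + 0) scaler0 addr0.
Qed.
HB.instance Definition _ := GRing.isLinear.Build K X pushout _ pushout_inl
  pushout_inl_linear.

Fact pushout_inr_linear : linear pushout_inr.
Proof.
move=> a n n'; rewrite -linearP; congr (pi (_, _)).
by rewrite -[RHS]/(a *: 0 + 0) scaler0 addr0.
Qed.
HB.instance Definition _ := GRing.isLinear.Build K N pushout _ pushout_inr
  pushout_inr_linear.

Lemma pushout_square y : pushout_inl (q y) = pushout_inr (u y).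
Proof.
apply/eqP; rewrite quotmod_pi_eq; apply/asboolP; exists y.
by rewrite -[LHS]/(q y - 0, 0 - u y) subr0 sub0r.
Qed.

Lemma pushout_inr_inj : (forall y, q y = 0 -> u y = 0) -> injective pushout_inr.
Proof.
move=> u_ker n n' /eqP; rewrite quotmod_pi_eq => /asboolP[y [qy0 /eqP]].
by rewrite u_ker -?qy0 ?subr0 // oppr0 subr_eq0 => /eqP.
Qed.

Lemma pushout_decomp z : exists x n, z = pushout_inl x + pushout_inr n.
Proof.
have [[x n] <-] := quotmod_pi_surj z; exists x, n.
rewrite /pushout_inl /pushout_inr -raddfD.
by rewrite -[(x, 0) + (0, n)]/(x + 0, 0 + n) addr0 add0r.
Qed.

Lemma pushout_desc (W : lmodType K) (a : {linear X -> W}) (b : {linear N -> W}) :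
  (forall y, a (q y) = b (u y)) ->
  exists f : {linear pushout -> W},
    (forall x, f (pushout_inl x) = a x) /\ (forall n, f (pushout_inr n) = b n).
Proof.
move=> ab_q.
have [f fP] : exists f : {linear pushout -> W}, forall z, f (pi z) = a z.1 + b z.2.
  apply: (linear_factor_epi (quotmod_pi_surj (S_submod := pushout_rel_submod_closed))
    (f := (a \o fst) \+ (b \o snd))).
  by move=> z /quotmod_pi_eq0 /asboolP[y ->] /=; rewrite ab_q raddfN subrr.
by exists f; split => [x|n]; rewrite fP /= ?linear0 ?addr0 ?add0r.
Qed.

End Pushout.

Section RightModules.
Variable R : pzRingType.
Implicit Types T M N Q X : rmodType R.

Lemma Gen_epi T M N (rho : {linear M -> N}) : surj rho -> Gen T M -> Gen T N.
Proof.
move=> rho_surj [I [f f_onto]]; exists I, (fun i => rho \o f i : {linear T -> N}).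
move=> n; have [m <-] := rho_surj n; have [s ->] := f_onto m.
by exists s; rewrite raddf_sum.
Qed.

Lemma superfluous_kernel_vanish Q X M (q : {linear Q -> X}) (f : {linear Q -> M}) :
  superfluous_kernel q -> (forall y, exists2 k, q k = 0 & f k = f y) ->
  forall y, f y = 0.
Proof.
move=> q_sf f_ker y; apply/eqP.
have ker_f : submod_closed [pred x | f x == 0].
  split=> [|a x x']; rewrite !inE ?linear0 //.
  by rewrite linearP => /eqP-> /eqP->; rewrite scaler0 addr0.
apply: (q_sf _ ker_f) => x; have [k qk fk] := f_ker x.
by exists k, (x - k); rewrite inE linearB fk subrr addrC subrK.
Qed.

Lemma Ext1_zero_extend T N Q (P0 : rmodType R)
    (q : {linear Q -> P0}) (eps : {linear P0 -> T}) :
  surj eps -> (forall x, eps x = 0 <-> exists y, x = q y) -> Ext1_zero T N ->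
  forall u : {linear Q -> N}, (forall y, q y = 0 -> u y = 0) ->
  exists h : {linear P0 -> N}, forall y, h (q y) = u y.
Proof.
move=> eps_surj eps_ker ext0 u u_ker.
have eps_q y : eps (q y) = 0 by apply/eps_ker; exists y.
have [p [p_inl p_inr]] : exists p : {linear pushout q u -> T},
    (forall x, p (pushout_inl q u x) = eps x) /\ (forall n, p (pushout_inr q u n) = 0).
  exact: (pushout_desc (b := \0)).
have inr_inj := pushout_inr_inj u_ker.
have p_surj : surj p.
  by move=> t; have [x <-] := eps_surj t; exists (pushout_inl q u x).
have p_ker e : p e = 0 <-> exists n, e = pushout_inr q u n.
  split=> [|[n ->]]; last exact: p_inr.
  have [x [n ->]] := pushout_decomp e; rewrite linearD p_inl p_inr addr0.
  by case/eps_ker => y ->; exists (u y + n); rewrite pushout_square raddfD.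
have [s ps] := ext0 _ _ _ inr_inj p_surj p_ker.
have [h hP] : exists h : {linear P0 -> N},
    forall x, pushout_inr q u (h x) = (pushout_inl q u \- (s \o eps)) x.
  apply: (linear_factor_mono (f := pushout_inl q u \- (s \o eps)) inr_inj) => x.
  by apply/p_ker; rewrite /= linearB p_inl ps subrr.
by exists h => y; apply: inr_inj; rewrite hP /= -pushout_square eps_q linear0 subr0.
Qed.

Lemma tau_rigid_Gen_perp T : tau_rigid T -> forall M, Gen T M -> perp T M.
Proof.
case=> P1 [P0 [phi [pi [_ P0_proj pi_surj pi_ker phi_ext]]]] M GM.
move=> E i p i_inj p_surj p_ker.
have [h0 h0P] := P0_proj E T p pi p_surj.
have [g gP] : exists g : {linear P1 -> M}, forall y, i (g y) = h0 (phi y).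
  apply: (linear_factor_mono (f := h0 \o phi) i_inj) => y; apply/p_ker.
  by rewrite /= h0P; apply/pi_ker; exists y.
have [h hP] := phi_ext M GM g.
have [s sP] : exists s : {linear T -> E}, forall x, s (pi x) = (h0 \- (i \o h)) x.
  apply: linear_factor_epi pi_surj _ => x /pi_ker[y ->].
  by rewrite /= hP gP subrr.
exists s => t; have [x <-] := pi_surj t.
have p_i m : p (i m) = 0 by apply/p_ker; exists m.
by rewrite sP /= linearB h0P p_i subr0.
Qed.

Lemma Gen_perp_extend T M Q (P0 : rmodType R) (q : {linear Q -> P0})
    (eps : {linear P0 -> T}) (g : {linear Q -> M}) :
  projective P0 -> surj eps -> (forall x, eps x = 0 <-> exists y, x = q y) ->
  superfluous_kernel q -> (forall N, Gen T N -> perp T N) -> Gen T M ->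
  exists h : {linear P0 -> M}, forall y, h (q y) = g y.
Proof.
move=> P0_proj eps_surj eps_ker q_sf Gen_perp GM.
pose S := [pred m | `[< exists2 k, q k = 0 & m = g k >]].
have S_closed : submod_closed S.
  split; first by apply/asboolP; exists 0; rewrite ?raddf0.
  move=> a _ _ /asboolP[k qk ->] /asboolP[k' qk' ->]; apply/asboolP.
  by exists (a *: k + k'); rewrite linearP ?qk ?qk' ?scaler0 ?addr0.
pose rho := quotmod_pi S_closed.
have GN := Gen_epi (quotmod_pi_surj (S_submod := S_closed)) GM.
have [h' h'P] : exists h' : {linear P0 -> quotmod S_closed},
    forall y, h' (q y) = (rho \o g) y.
  apply: (Ext1_zero_extend eps_surj eps_ker (Gen_perp _ GN)) => y qy /=.
  by apply/quotmod_pi_eq0/asboolP; exists y.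
have [h1 h1P] := P0_proj _ _ rho h' (quotmod_pi_surj (S_submod := S_closed)).
exists h1 => y; apply/eqP; rewrite eq_sym -subr_eq0; apply/eqP.
apply: (superfluous_kernel_vanish (f := g \- (h1 \o q)) q_sf) => {}y.
have : (g \- (h1 \o q)) y \in S.
  by apply/quotmod_pi_eq0; rewrite /= linearB h1P h'P subrr.
case/asboolP => k qk gk; exists k => //=.
by rewrite qk linear0 subr0 -gk.
Qed.

End RightModules.

Unset Implicit Arguments.

Theorem proposition5p6 (R : pzRingType) (T : rmodType R)
  (P : nat -> rmodType R) (d : forall n, {linear P n.+1 -> P n})
  (eps : {linear P 0 -> T}) :
  proj_resolution d eps ->
  syzygy1_has_proj_cover eps ->
  (tau_rigid T <-> forall M : rmodType R, Gen T M -> perp T M).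
Proof.
case=> P_proj eps_surj eps_ker _ [Q [q [Q_proj q_im q_sf]]].
split=> [|Gen_perp]; first exact: tau_rigid_Gen_perp.
exists Q, (P 0), q, eps; split=> // M GM g.
exact: Gen_perp_extend.
Qed.
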